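(* Let $X$ be a completely subscalable nonnegative random variable and let $g : [0,\infty) \to [0,\infty)$ be an increasing (non-decreasing) convex function with $g(0) = 0$. Then the random variable $Y := g(X)$ is completely subscalable.
   Context: A nonnegative random variable $X$ with survival function $\overline{F}(x)=\mathbb{P}(X>x)$ is called completely subscalable if $\theta \, \overline{F}(x) \leq \overline{F}(x/\theta)$ for all $x \geq 0$ and all $\theta \in (0,1)$. *)

From HB Require Import structures.
From mathcomp Require Import all_boot all_order all_algebra.
From mathcomp Require Import all_classical all_reals all_analysis.
Set Implicit Arguments. Unset Strict Implicit. Unset Printing Implicit Defensive.
Import Order.TTheory GRing.Theory Num.Theory.
Local Open Scope classical_set_scope.
Local Open Scope ring_scope.

Definition survival d (T : measurableType d) (R : realType)
  (P : probability T R) (X : T -> R) (x : R) : \bar R :=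
  P [set w | x < X w].

Definition completely_subscalable d (T : measurableType d) (R : realType)
  (P : probability T R) (X : T -> R) : Prop :=
  [/\ measurable_fun setT X,
      (forall w, 0 <= X w) &
      forall (x theta : R), 0 <= x -> 0 < theta -> theta < 1 ->
        (theta%:E * survival P X x <= survival P X (x / theta))%E].

From HB Require Import structures.
From mathcomp Require Import all_boot all_order all_algebra.
From mathcomp Require Import all_classical all_reals all_analysis.
From mathcomp Require Import ring lra measurable_realfun.
Import Order.TTheory GRing.Theory Num.Theory.
Local Open Scope classical_set_scope.
Local Open Scope ring_scope.

(* For x >= 0 the superlevel set {y >= 0 | x < g y} is an up-set, as g is
   nondecreasing, and it is open: a convex g is left-continuous at every s > 0,
   and g 0 = 0 <= x.  Hence it is a ray ]s, +oo[ and P(g X > x) = P(X > s).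
   Convexity with g 0 = 0 also gives g (theta y) <= theta g y, so X > s / theta
   forces g X > x / theta: subscalability of X at s transfers to g X at x. *)

Section nondecreasing_convex_on_nonneg.
Context {R : realType} {g : R -> R}.
Hypothesis g_nd : forall x y : R, 0 <= x -> x <= y -> g x <= g y.
Hypothesis g_convex : forall x y t : R, 0 <= x -> 0 <= y -> 0 <= t -> t <= 1 ->
  g (t * x + (1 - t) * y) <= t * g x + (1 - t) * g y.
Hypothesis g0 : g 0 = 0.

Lemma convex_scale_le (y t : R) : 0 <= y -> 0 <= t -> t <= 1 ->
  g (t * y) <= t * g y.
Proof.
move=> y0 t0 t1; have := g_convex _ _ _ y0 (lexx 0) t0 t1.
by rewrite g0 !mulr0 !addr0.
Qed.

(* Convexity along ts < s < 2s, with s = (ts + (1 - t) 2s) / (2 - t). *)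
Lemma convex_left_estimate (s t : R) : 0 <= s -> 0 <= t -> t <= 1 ->
  g s - (1 - t) * (g (2 * s) - g s) <= g (t * s).
Proof.
move=> s0 t0 t1; have t2 : 0 < 2 - t by lra.
have a0 : 0 <= (2 - t)^-1 by rewrite invr_ge0 ltW.
have a1 : (2 - t)^-1 <= 1 by rewrite invr_le1 ?unitfE ?gt_eqF //; lra.
have := g_convex _ _ _ (mulr_ge0 t0 s0) (mulr_ge0 (ler0n _ 2) s0) a0 a1.
have -> : (2 - t)^-1 * (t * s) + (1 - (2 - t)^-1) * (2 * s) = s.
  by field; rewrite gt_eqF.
have -> : (2 - t)^-1 * g (t * s) + (1 - (2 - t)^-1) * g (2 * s)
          = (g (t * s) + (1 - t) * g (2 * s)) / (2 - t).
  by field; rewrite gt_eqF.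
rewrite ler_pdivlMr //; lra.
Qed.

Lemma superlevel_left_open (x s : R) : 0 < s -> x < g s ->
  exists2 r, 0 <= r < s & x < g r.
Proof.
move=> s0 xs; pose D := g (2 * s) - g s.
have D0 : 0 <= D by rewrite subr_ge0 g_nd //; lra.
pose e := (g s - x) / (D + (g s - x)).
have den0 : 0 < D + (g s - x) by lra.
have e0 : 0 < e by rewrite divr_gt0 //; lra.
have e1 : e <= 1 by rewrite ler_pdivrMr // mul1r; lra.
have eD : e * D < g s - x.
  by rewrite /e mulrAC ltr_pdivrMr // ltr_pM2l; lra.
have t0 : 0 <= 1 - e by lra.
have t1 : 1 - e <= 1 by lra.
exists ((1 - e) * s); first by rewrite mulr_ge0 ?(ltW s0) //=; nra.
have := convex_left_estimate _ _ (ltW s0) t0 t1.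
rewrite -/D => est; lra.
Qed.

Lemma superlevel_threshold (x : R) :
  0 <= x -> (exists2 y : R, 0 <= y & x < g y) ->
  exists2 s : R, 0 <= s & forall y : R, 0 <= y -> (x < g y) = (s < y).
Proof.
move=> x0 [y1 y1_ge0 xy1]; pose S := [set y | 0 <= y /\ x < g y].
have SN : S !=set0 by exists y1.
have lbS : has_lbound S by exists 0 => y [].
exists (inf S); first by apply: lb_le_inf => // y [].
move=> y y0; apply/idP/idP => [xy | Sy]; last first.
  have [z [z0 xz] zy] := inf_lt SN Sy.
  exact: lt_le_trans xz (g_nd _ _ z0 (ltW zy)).
have y_gt0 : 0 < y.
  by rewrite lt_neqAle y0 andbT; apply: contraTneq xy => <-; rewrite g0 -leNgt.
have [r /andP[r0 ry] xr] := superlevel_left_open _ _ y_gt0 xy.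
have Sr : inf S <= r by apply: ge_inf.
exact: le_lt_trans Sr ry.
Qed.

End nondecreasing_convex_on_nonneg.

Section survival_monotone.
Context {d : measure_display} {T : measurableType d} {R : realType}.

Lemma measurable_gtr_preimage (f : T -> R) (a : R) :
  measurable_fun setT f -> measurable [set w | a < f w].
Proof.
move=> mf; have := mf measurableT `]a, +oo[%classic (measurable_itv _).
rewrite setTI; congr measurable.
by apply/seteqP; split=> w /=; rewrite in_itv /= andbT.
Qed.

(* g is only monotone on the half-line, so compose with the nondecreasing
   function y |-> g (max y 0), which agrees with g on the range of f. *)
Lemma measurable_comp_nondecreasing_nonneg {f : T -> R} {g : R -> R} :
  measurable_fun setT f -> (forall w, 0 <= f w) ->
  (forall x y, 0 <= x -> x <= y -> g x <= g y) ->
  measurable_fun setT (g \o f).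
Proof.
move=> mf f_ge0 g_nd.
have -> : g \o f = (fun y => g (Num.max y 0)) \o f.
  by apply: funext => w /=; rewrite max_l.
apply: measurableT_comp mf; apply: nondecreasing_measurable => // a b ab /=.
apply: g_nd; first by rewrite le_max lexx orbT.
by rewrite ge_max !le_max ab lexx !orbT.
Qed.

Lemma le_survival (P : probability T R) (X Y : T -> R) (a b : R) :
  measurable_fun setT X -> measurable_fun setT Y ->
  (forall w, a < X w -> b < Y w) -> (survival P X a <= survival P Y b)%E.
Proof.
move=> mX mY XY; apply: le_measure => //; rewrite inE.
- exact: measurable_gtr_preimage.
- exact: measurable_gtr_preimage.
Qed.

End survival_monotone.

Theorem lemma8 (d : measure_display) (T : measurableType d) (R : realType)
  (P : probability T R) (X : T -> R) (g : R -> R) :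
  completely_subscalable P X ->
  (forall x, 0 <= x -> 0 <= g x) ->
  (forall x y, 0 <= x -> x <= y -> g x <= g y) ->
  (forall x y t, 0 <= x -> 0 <= y -> 0 <= t -> t <= 1 ->
     g (t * x + (1 - t) * y) <= t * g x + (1 - t) * g y) ->
  g 0 = 0 ->
  completely_subscalable P (g \o X).
Proof.
move=> [mX X_ge0 X_sub] g_ge0 g_nd g_convex g0.
have mgX := measurable_comp_nondecreasing_nonneg mX X_ge0 g_nd.
split=> // [w | x th x0 th0 th1]; first exact: g_ge0.
have [[y y0 xy] | no_y] := pselect (exists2 y : R, 0 <= y & x < g y); last first.
  have -> : survival P (g \o X) x = 0%E.
    rewrite /survival [X in P X](_ : _ = set0) ?measure0 //.
    by apply/seteqP; split=> w //= xw; apply: no_y; exists (X w).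
  by rewrite mule0 measure_ge0.
have [s s0 threshold] :=
  superlevel_threshold g_nd g_convex g0 _ x0 (ex_intro2 _ _ y y0 xy).
have -> : survival P (g \o X) x = survival P X s.
  rewrite /survival; congr (P _).
  by apply/seteqP; split=> w /=; rewrite threshold.
apply: le_trans (X_sub s th s0 th0 th1) _; apply: le_survival => // w sw.
have : x < g (th * X w).
  by rewrite threshold ?mulr_ge0 ?(ltW th0) // mulrC -ltr_pdivrMr.
rewrite ltr_pdivrMr // [_ * th]mulrC => /lt_le_trans; apply.
exact: convex_scale_le g_convex g0 _ _ (X_ge0 w) (ltW th0) (ltW th1).
Qed.
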